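(* Let $N,S,d\ge 1$ be integers and let $\pi$ be a next-token distribution on $[N]^S$ such that $\pi(t_{S+1}\mid t_{1:S})\neq 0$ for all $t_{1:S}\in[N]^S$ and $t_{S+1}\in[N]$ (all conditional distributions have full support). Then there exists $f\in\mathcal{L}(N,S,d)$ such that $d_{KL}(\pi,f)=d_{KL}(\pi,\mathcal{L}(N,S,d))$.
   Context: $[N]=\{1,\dots,N\}$. A next-token distribution $\pi$ consists of a prior probability distribution on $[N]^S$ together with, for each $t_{1:S}\in[N]^S$, a conditional probability distribution $\pi_{t_{1:S}}=\pi(\cdot\mid t_{1:S})$ on $[N]$. For $f:[N]^S\to\mathbb{R}^N$, $d_{KL}(\pi,f):=\mathbb{E}_{t_{1:S}\sim\pi}\big[\mathrm{KL}(\pi_{t_{1:S}}\,\|\,\mathrm{Softmax}(f(t_{1:S})))\big]$. The set of sequence encoders is $\mathcal{L}(N,S,d):=\{f_{W,E}: W\in\mathbb{R}^{N\times d},\ E:[N]^S\to\mathbb{R}^d\}$ with $f_{W,E}(t_{1:S})=W E(t_{1:S})$, and $d_{KL}(\pi,\mathcal{L}(N,S,d)):=\inf_{f\in\mathcal{L}(N,S,d)}d_{KL}(\pi,f)$. *)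

From HB Require Import structures.
From mathcomp Require Import all_boot all_order all_algebra.
From mathcomp Require Import all_classical all_reals all_analysis.
Set Implicit Arguments. Unset Strict Implicit. Unset Printing Implicit Defensive.
Import Order.TTheory GRing.Theory Num.Theory.
Local Open Scope ring_scope.
Local Open Scope classical_set_scope.

Section Defs.
Variables (R : realType) (N S d : nat).

Definition ctx := (S.-tuple 'I_N)%type.

(* prior : probability distribution on [N]^S ; cond t : probability on [N] *)
Definition is_next_token_dist (prior : ctx -> R) (cond : ctx -> 'I_N -> R) : Prop :=
  (forall t, 0 <= prior t) /\ \sum_(t : ctx) prior t = 1 /\
  (forall t i, 0 <= cond t i) /\ (forall t, \sum_(i < N) cond t i = 1).

Definition softmax (z : 'cV[R]_N) : 'I_N -> R :=
  fun i => expR (z i ord0) / \sum_(j < N) expR (z j ord0).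

(* KL(p || q) = sum_i p_i log(p_i / q_i)  (0 log 0 = 0 since ln 0 = 0 here) *)
Definition KL (p q : 'I_N -> R) : R :=
  \sum_(i < N) (if p i == 0 then 0 else p i * ln (p i / q i)).

Definition dKL (prior : ctx -> R) (cond : ctx -> 'I_N -> R)
  (f : ctx -> 'cV[R]_N) : R :=
  \sum_(t : ctx) prior t * KL (cond t) (softmax (f t)).

Definition encoder (W : 'M[R]_(N, d)) (E : ctx -> 'cV[R]_d) : ctx -> 'cV[R]_N :=
  fun t => W *m E t.

Definition encoders : set (ctx -> 'cV[R]_N) :=
  [set f | exists (W : 'M[R]_(N, d)) (E : ctx -> 'cV[R]_d), f = encoder W E].

Definition dKL_L (prior : ctx -> R) (cond : ctx -> 'I_N -> R) : R :=
  inf [set dKL prior cond f | f in encoders].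

End Defs.

From HB Require Import structures.
From mathcomp Require Import all_boot all_order all_algebra.
From mathcomp Require Import all_classical all_reals all_analysis.
From mathcomp Require Import ring lra.
Import Order.TTheory GRing.Theory Num.Theory.
Import numFieldTopology.Exports numFieldNormedType.Exports.
Local Open Scope ring_scope.
Local Open Scope classical_set_scope.
Set Implicit Arguments. Unset Strict Implicit.

(* Expanding the logarithm, d_KL(pi, f) is an f-independent entropy term plus
   the expected cross-entropy of the logits f(t), so it suffices to minimise the
   latter over encoders f = W E. Cross-entropy is unchanged by adding a constant
   to the logits, and since pi(.|t) has full support, a cross-entropy at most c
   forces every difference of logits to be at most c / pi(b|t); so after
   centering, the logits of every context of positive prior are bounded in terms
   of c. Factoring W = U C with U a partial isometry (U U^T U = U) keeps the
   logits z_t = U (U^T z_t) while bounding the entries of U by 1 and those of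
   E(t) = U^T z_t by N times that bound. Hence every encoder doing at least as
   well as f = 0 is matched by one with parameters in a fixed compact box, where
   the continuous objective attains its minimum. *)

Section PartialIsometry.
Variable R : rcfType.

Definition partial_isometry m n (W : 'M[R]_(m, n)) := W *m W^T *m W = W.

Lemma trmx_mul_self_diag m n (W : 'M[R]_(m, n)) j :
  (W^T *m W) j j = \sum_i W i j ^+ 2.
Proof. by rewrite mxE; apply: eq_bigr => i _; rewrite mxE. Qed.

Lemma sqr_le_trmx_mul_self m n (W : 'M[R]_(m, n)) i j :
  W i j ^+ 2 <= (W^T *m W) j j.
Proof.
by rewrite trmx_mul_self_diag (bigD1 i) //= lerDl sumr_ge0 // => k _; rewrite sqr_ge0.
Qed.

Lemma partial_isometry_entry_le1 m n (W : 'M[R]_(m, n)) i j :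
  partial_isometry W -> `|W i j| <= 1.
Proof.
move=> WW; pose P := W^T *m W.
have PP : P *m P = P.
  by rewrite /P mulmxA -[W^T *m W *m W^T]mulmxA -mulmxA WW.
have P_sym : P^T = P by rewrite /P trmx_mul trmxK.
have Pjj : P j j = \sum_k P j k ^+ 2.
  rewrite -{1}PP mxE; apply: eq_bigr => k _.
  by rewrite expr2 -[in P k j]P_sym [P^T k j]mxE.
have Pjj_le1 : P j j <= 1.
  have : P j j ^+ 2 <= P j j.
    by rewrite {2}Pjj (bigD1 j) //= lerDl sumr_ge0 // => k _; rewrite sqr_ge0.
  have : 0 <= P j j by rewrite Pjj sumr_ge0 // => k _; rewrite sqr_ge0.
  nra.
rewrite -(@ler_pXn2r _ 2) ?nnegrE // expr1n real_normK ?num_real //.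
exact: le_trans (sqr_le_trmx_mul_self W i j) Pjj_le1.
Qed.

Definition normalize n (w : 'cV[R]_n) := (Num.sqrt ((w^T *m w) 0 0))^-1 *: w.

Lemma normalizeK n (w : 'cV[R]_n) : Num.sqrt ((w^T *m w) 0 0) *: normalize w = w.
Proof.
have [s0|s_neq0] := eqVneq ((w^T *m w) 0 0) 0.
  have -> : w = 0.
    apply/matrixP => i k; rewrite (ord1 k) mxE; apply/eqP; rewrite -sqrf_eq0 eq_le sqr_ge0.
    by rewrite andbT -s0 sqr_le_trmx_mul_self.
  by rewrite /normalize !scaler0.
rewrite scalerA divff ?scale1r // sqrtr_eq0 -ltNge lt_neqAle eq_sym s_neq0.
by rewrite trmx_mul_self_diag sumr_ge0 // => i _; rewrite sqr_ge0.
Qed.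

Lemma partial_isometry_normalize n (w : 'cV[R]_n) : partial_isometry (normalize w).
Proof.
rewrite /partial_isometry -mulmxA.
have [s0|s_neq0] := eqVneq ((w^T *m w) 0 0) 0.
  by rewrite /normalize s0 sqrtr0 invr0 scale0r !mul0mx.
suff -> : (normalize w)^T *m normalize w = 1%:M by rewrite mulmx1.
have s_ge0 : 0 <= (w^T *m w) 0 0.
  by rewrite trmx_mul_self_diag sumr_ge0 // => i _; rewrite sqr_ge0.
apply/matrixP => i j; rewrite (ord1 i) (ord1 j) trmx_mul_self_diag mxE /=.
under eq_bigr do rewrite mxE exprMn.
by rewrite -mulr_sumr -trmx_mul_self_diag exprVn sqr_sqrtr // mulVf.
Qed.

Lemma partial_isometry_row_mx m n1 n2 (U : 'M[R]_(m, n1)) (V : 'M[R]_(m, n2)) :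
  partial_isometry U -> partial_isometry V -> V^T *m U = 0 ->
  partial_isometry (row_mx U V).
Proof.
move=> UU VV VU; have UV : U^T *m V = 0 by rewrite -[U^T *m V]trmxK trmx_mul trmxK VU trmx0.
rewrite /partial_isometry tr_row_mx mul_row_col mulmxDl mul_mx_row mul_mx_row.
by rewrite -!mulmxA VU UV !mulmx0 add_row_mx addr0 add0r !mulmxA UU VV.
Qed.

Lemma partial_isometry_factor m n (W0 : 'M[R]_(m, n)) :
  exists (W : 'M[R]_(m, n)) (C : 'M[R]_n), W0 = W *m C /\ partial_isometry W.
Proof.
elim: n W0 => [|n IHn] W0.
  by exists W0, 1%:M; rewrite mulmx1 /partial_isometry !thinmx0.
move: W0; rewrite -[n.+1]/(1 + n)%N => W0.
rewrite -[W0]hsubmxK; set w := lsubmx W0; set V0 := rsubmx W0.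
have [V [C [-> VV]]] := IHn V0.
pose w' := w - V *m (V^T *m w); pose s := (w'^T *m w') 0 0.
have Vw' : V^T *m w' = 0.
  have := congr1 trmx VV; rewrite !trmx_mul trmxK mulmxA => VtVVt.
  by rewrite mulmxBr !mulmxA VtVVt subrr.
exists (row_mx (normalize w') V), (block_mx (Num.sqrt s)%:M 0 (V^T *m w) C); split.
  by rewrite mul_row_block mulmx0 add0r mul_mx_scalar normalizeK subrK.
apply: partial_isometry_row_mx => //; first exact: partial_isometry_normalize.
by rewrite /normalize -scalemxAr Vw' scaler0.
Qed.

Lemma bounded_factorization (T : Type) m n (W0 : 'M[R]_(m, n)) (E0 : T -> 'cV[R]_n) B :
  (forall t i, `|(W0 *m E0 t) i 0| <= B) ->
  exists (W : 'M[R]_(m, n)) (E : T -> 'cV[R]_n),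
    [/\ forall i j, `|W i j| <= 1, forall t k, `|E t k 0| <= m%:R * B
      & forall t, W *m E t = W0 *m E0 t].
Proof.
move=> W0E0_le; have [W [C [W0E WW]]] := partial_isometry_factor W0.
exists W, (fun t => W^T *m (W0 *m E0 t)); split.
- by move=> i j; exact: partial_isometry_entry_le1.
- move=> t k; rewrite mxE; apply: le_trans (ler_norm_sum _ _ _) _.
  rewrite mulr_natl -[X in B *+ X]card_ord -sumr_const; apply: ler_sum => i _.
  by rewrite normrM -[B]mul1r mxE ler_pM //; exact: partial_isometry_entry_le1.
- by move=> t; rewrite W0E !mulmxA WW.
Qed.

End PartialIsometry.

Section CrossEntropy.
Variables (R : realType) (N : nat).
Hypothesis N_gt0 : (0 < N)%N.

Definition logsumexp (z : 'cV[R]_N) := ln (\sum_j expR (z j 0)).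

Definition cross_entropy (p : 'I_N -> R) (z : 'cV[R]_N) :=
  logsumexp z - \sum_i p i * z i 0.

Definition centering : 'M[R]_N := 1%:M - N%:R^-1 *: const_mx 1.

Lemma sum_expR_gt0 (z : 'cV[R]_N) : 0 < \sum_j expR (z j 0).
Proof.
rewrite (bigD1 (Ordinal N_gt0)) //= ltr_wpDr ?expR_gt0 //.
by rewrite sumr_ge0 // => k _; rewrite expR_ge0.
Qed.

Lemma le_logsumexp (z : 'cV[R]_N) k : z k 0 <= logsumexp z.
Proof.
rewrite /logsumexp -{1}(expRK (z k 0)) ler_ln ?posrE ?expR_gt0 ?sum_expR_gt0 //.
by rewrite (bigD1 k) //= lerDl sumr_ge0 // => j _; rewrite expR_ge0.
Qed.

Lemma logsumexpD_const (z : 'cV[R]_N) c :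
  logsumexp (z + const_mx c) = logsumexp z + c.
Proof.
rewrite /logsumexp.
have -> : \sum_j expR ((z + const_mx c) j 0) = expR c * \sum_j expR (z j 0).
  by rewrite mulr_sumr; apply: eq_bigr => j _; rewrite !mxE expRD mulrC.
by rewrite lnM ?posrE ?expR_gt0 ?sum_expR_gt0 // expRK addrC.
Qed.

Lemma centeringE (z : 'cV[R]_N) :
  centering *m z = z + const_mx (- (N%:R^-1 * \sum_j z j 0)).
Proof.
apply/matrixP => i k; rewrite (ord1 k) /centering mulmxBl mul1mx -scalemxAl !mxE.
by congr (_ - _ * _); apply: eq_bigr => j _; rewrite !mxE mul1r.
Qed.

Variable p : 'I_N -> R.
Hypotheses (p_gt0 : forall i, 0 < p i) (p_sum1 : \sum_i p i = 1).

Lemma cross_entropyE (z : 'cV[R]_N) :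
  cross_entropy p z = \sum_i p i * (logsumexp z - z i 0).
Proof.
under eq_bigr do rewrite mulrBr.
by rewrite sumrB -mulr_suml p_sum1 mul1r.
Qed.

Lemma cross_entropy_gap (z : 'cV[R]_N) a b :
  p b * (z a 0 - z b 0) <= cross_entropy p z.
Proof.
have term_ge0 i : 0 <= p i * (logsumexp z - z i 0).
  by rewrite mulr_ge0 ?subr_ge0 ?le_logsumexp // ltW.
rewrite cross_entropyE (bigD1 b) //= ler_wpDr ?sumr_ge0 //.
by rewrite ler_wpM2l ?(ltW (p_gt0 b)) // lerD2r le_logsumexp.
Qed.

Lemma cross_entropy_ge0 (z : 'cV[R]_N) : 0 <= cross_entropy p z.
Proof.
by apply: le_trans (cross_entropy_gap z (Ordinal N_gt0) (Ordinal N_gt0)); rewrite subrr mulr0.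
Qed.

Lemma KL_softmax (z : 'cV[R]_N) :
  KL p (softmax z) = \sum_i p i * ln (p i) + cross_entropy p z.
Proof.
rewrite cross_entropyE -big_split /KL; apply: eq_bigr => i _ /=.
have pi_gt0 := p_gt0 i; have sum_gt0 := sum_expR_gt0 z.
rewrite gt_eqF // /softmax lnM ?posrE ?invr_gt0 ?divr_gt0 ?expR_gt0 //.
rewrite lnV ?posrE ?divr_gt0 ?expR_gt0 // lnM ?posrE ?invr_gt0 ?expR_gt0 //.
rewrite lnV ?posrE // expRK /logsumexp; ring.
Qed.

Lemma cross_entropyD_const (z : 'cV[R]_N) c :
  cross_entropy p (z + const_mx c) = cross_entropy p z.
Proof.
rewrite /cross_entropy logsumexpD_const.
have -> : \sum_i p i * (z + const_mx c) i 0 = \sum_i p i * z i 0 + c.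
  rewrite -{2}[c]mul1r -p_sum1 mulr_suml -big_split.
  by apply: eq_bigr => i _; rewrite !mxE mulrDr.
by rewrite opprD addrACA subrr addr0.
Qed.

Lemma cross_entropy_centering (z : 'cV[R]_N) :
  cross_entropy p (centering *m z) = cross_entropy p z.
Proof. by rewrite centeringE cross_entropyD_const. Qed.

Lemma centering_bound (z : 'cV[R]_N) c i :
  cross_entropy p z <= c -> `|(centering *m z) i 0| <= \sum_a c / p a.
Proof.
move=> z_le; have c_ge0 := le_trans (cross_entropy_ge0 z) z_le.
have gap_le a b : z a 0 - z b 0 <= \sum_a c / p a.
  apply: le_trans (_ : c / p b <= _).
    by rewrite ler_pdivlMr // mulrC (le_trans (cross_entropy_gap z a b)).
  by rewrite (bigD1 b) //= lerDl sumr_ge0 // => k _; rewrite divr_ge0 // ltW.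
have N_pos : 0 < N%:R :> R by rewrite ltr0n.
have -> : (centering *m z) i 0 = N%:R^-1 * \sum_j (z i 0 - z j 0).
  rewrite centeringE !mxE sumrB sumr_const card_ord -[z i 0 *+ N]mulr_natr mulrBr.
  by rewrite mulrCA mulVf ?gt_eqF // mulr1.
rewrite normrM ger0_norm ?invr_ge0 ?ler0n // ler_pdivrMl //.
apply: le_trans (ler_norm_sum _ _ _) _.
rewrite mulr_natl -[X in _ *+ X]card_ord -sumr_const; apply: ler_sum => j _.
by rewrite ler_norml gap_le andbT lerNl opprB gap_le.
Qed.

End CrossEntropy.

Arguments centering {R N}.

Section ContinuousRealFunctions.
Variables (R : realType) (T : topologicalType).

Lemma continuous_sum (I : finType) (F : I -> T -> R) :
  (forall i, continuous (F i)) -> continuous (fun x => \sum_i F i x).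
Proof. by move=> F_cont; apply: continuous_big => [|i _]; [exact: add_continuous | exact: F_cont]. Qed.

Lemma continuous_mul_fun (f g : T -> R) :
  continuous f -> continuous g -> continuous (fun x => f x * g x).
Proof. by move=> f_cont g_cont x; exact: continuousM (f_cont x) (g_cont x). Qed.

Lemma continuous_sub_fun (f g : T -> R) :
  continuous f -> continuous g -> continuous (fun x => f x - g x).
Proof. by move=> f_cont g_cont x; exact: continuousB (f_cont x) (g_cont x). Qed.

End ContinuousRealFunctions.

Section ParameterVector.
Variables (R : realType) (m n : nat) (T : finType).

Local Notation coord := ('I_m * 'I_n + 'I_n * T)%type.
Local Notation dim := #|{: coord}|.

Definition mx_of_params (v : 'rV[R]_dim) : 'M[R]_(m, n) :=
  \matrix_(i, j) v ord0 (enum_rank (inl (i, j) : coord)).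

Definition emb_of_params (v : 'rV[R]_dim) : T -> 'cV[R]_n :=
  fun t => \col_k v ord0 (enum_rank (inr (k, t) : coord)).

Definition params (W : 'M[R]_(m, n)) (E : T -> 'cV[R]_n) : 'rV[R]_dim :=
  \row_c match enum_val c with inl (i, j) => W i j | inr (k, t) => E t k 0 end.

Lemma mx_of_paramsK W E : mx_of_params (params W E) = W.
Proof. by apply/matrixP => i j; rewrite !mxE enum_rankK. Qed.

Lemma emb_of_paramsK W E : emb_of_params (params W E) = E.
Proof.
by apply/funext => t; apply/matrixP => k l; rewrite (ord1 l) !mxE enum_rankK.
Qed.

Lemma params_bounded (W : 'M[R]_(m, n)) (E : T -> 'cV[R]_n) M :
  (forall i j, `|W i j| <= M) -> (forall t k, `|E t k 0| <= M) ->
  forall c, `|params W E ord0 c| <= M.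
Proof. by move=> W_le E_le c; rewrite mxE; case: enum_val => [[i j]|[k t]]. Qed.

Lemma continuous_logit t i :
  continuous (fun v : 'rV[R]_dim => (mx_of_params v *m emb_of_params v t) i 0).
Proof.
have -> : (fun v : 'rV[R]_dim => (mx_of_params v *m emb_of_params v t) i 0) = fun v =>
    \sum_k v ord0 (enum_rank (inl (i, k) : coord)) * v ord0 (enum_rank (inr (k, t) : coord)).
  by apply/funext => v; rewrite mxE; apply: eq_bigr => k _; rewrite !mxE.
by apply: continuous_sum => k; apply: continuous_mul_fun; exact: coord_continuous.
Qed.

End ParameterVector.

Arguments continuous_logit {R m n T} t i.

Notation params_rV R m n T := 'rV[R]_#|{: ('I_m * 'I_n + 'I_n * T)%type}|.

Section NextToken.
Variables (R : realType) (N S : nat).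
Hypothesis N_gt0 : (0 < N)%N.
Variables (prior : ctx N S -> R) (cond : ctx N S -> 'I_N -> R).
Hypotheses (hpi : is_next_token_dist prior cond) (hfull : forall t i, cond t i != 0).

Let prior_ge0 t : 0 <= prior t. Proof. by case: hpi. Qed.
Let cond_gt0 t i : 0 < cond t i.
Proof. by case: hpi => _ [_ [cond_ge0 _]]; rewrite lt_neqAle eq_sym hfull cond_ge0. Qed.
Let cond_sum1 t : \sum_i cond t i = 1. Proof. by case: hpi => _ [_ [_ ->]]. Qed.

Definition expected_xent (f : ctx N S -> 'cV[R]_N) :=
  \sum_t prior t * cross_entropy (cond t) (f t).

Lemma dKLE (f : ctx N S -> 'cV[R]_N) :
  dKL prior cond f = \sum_t prior t * \sum_i cond t i * ln (cond t i) + expected_xent f.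
Proof.
rewrite -big_split; apply: eq_bigr => t _ /=.
by rewrite KL_softmax // -mulrDr.
Qed.

Lemma expected_xent_ge0 f : 0 <= expected_xent f.
Proof. by rewrite sumr_ge0 // => t _; rewrite mulr_ge0 ?cross_entropy_ge0. Qed.

Definition logit_bound (c : R) := \sum_t \sum_a c / (prior t * cond t a).

Lemma logit_bound_ge0 c : 0 <= c -> 0 <= logit_bound c.
Proof.
by move=> c_ge0; apply: sumr_ge0 => t _; apply: sumr_ge0 => a _; rewrite divr_ge0 ?mulr_ge0 // ltW.
Qed.

Lemma centered_logits_bound f c t i : prior t != 0 -> expected_xent f <= c ->
  `|(centering *m f t) i 0| <= logit_bound c.
Proof.
move=> prior_neq0 f_le; have prior_gt0 : 0 < prior t by rewrite lt_def prior_neq0 prior_ge0.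
have c_ge0 := le_trans (expected_xent_ge0 f) f_le.
have xent_le : cross_entropy (cond t) (f t) <= c / prior t.
  rewrite ler_pdivlMr // mulrC; apply: le_trans f_le.
  rewrite /expected_xent (bigD1 t) //= lerDl sumr_ge0 // => s _.
  by rewrite mulr_ge0 ?cross_entropy_ge0.
apply: le_trans (centering_bound N_gt0 (cond_gt0 t) (cond_sum1 t) i xent_le) _.
rewrite /logit_bound (bigD1 t) //= ler_wpDr //.
  by apply: sumr_ge0 => s _; apply: sumr_ge0 => a _; rewrite divr_ge0 ?mulr_ge0 // ltW.
by apply: ler_sum => a _; rewrite invfM mulrA.
Qed.

Lemma bounded_encoder d c (W0 : 'M[R]_(N, d)) (E0 : ctx N S -> 'cV[R]_d) :
  expected_xent (encoder W0 E0) <= c ->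
  exists (W : 'M[R]_(N, d)) (E : ctx N S -> 'cV[R]_d),
    [/\ forall i j, `|W i j| <= 1, forall t k, `|E t k 0| <= N%:R * logit_bound c
      & expected_xent (encoder W E) = expected_xent (encoder W0 E0)].
Proof.
move=> W0E0_le; have c_ge0 := le_trans (expected_xent_ge0 _) W0E0_le.
(* Contexts of prior 0 do not contribute, but their logits are unconstrained. *)
pose E1 t := if prior t == 0 then 0 else E0 t.
have logits_le t i : `|(centering *m W0 *m E1 t) i 0| <= logit_bound c.
  rewrite /E1; case: eqVneq => [_|prior_neq0].
    by rewrite mulmx0 mxE normr0 logit_bound_ge0.
  by rewrite -mulmxA; exact: (centered_logits_bound (f := encoder W0 E0)).
have [W [E [W_le E_le WE]]] := bounded_factorization logits_le.
exists W, E; split => //; apply: eq_bigr => t _; rewrite /encoder WE /E1.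
case: eqVneq => [-> | _]; first by rewrite !mul0r.
by rewrite -mulmxA cross_entropy_centering.
Qed.

Lemma continuous_expected_xent_params d :
  continuous (fun v : params_rV R N d (ctx N S) =>
    expected_xent (encoder (mx_of_params v) (emb_of_params v))).
Proof.
rewrite /expected_xent /cross_entropy /logsumexp /encoder.
apply: continuous_sum => t; apply: continuous_mul_fun; first exact: cst_continuous.
apply: continuous_sub_fun.
  have sum_cont : continuous (fun v : params_rV R N d (ctx N S) =>
      \sum_j expR ((mx_of_params v *m emb_of_params v t) j 0)).
    apply: continuous_sum => j v.
    exact: continuous_comp (continuous_logit t j v) (@continuous_expR R _).
  move=> v; exact: continuous_comp (sum_cont v) (continuous_ln (sum_expR_gt0 N_gt0 _)).
apply: continuous_sum => i; apply: continuous_mul_fun; first exact: cst_continuous.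
exact: continuous_logit.
Qed.

Lemma expected_xent_min d : exists (W : 'M[R]_(N, d)) (E : ctx N S -> 'cV[R]_d),
  forall (W0 : 'M[R]_(N, d)) E0, expected_xent (encoder W E) <= expected_xent (encoder W0 E0).
Proof.
pose c := expected_xent (encoder (mx_of_params (0 : params_rV R N d (ctx N S)))
                                 (emb_of_params (0 : params_rV R N d (ctx N S)))).
pose M := N%:R * logit_bound c + 1.
have M_ge1 : 1 <= M by rewrite lerDr mulr_ge0 ?logit_bound_ge0 ?expected_xent_ge0.
pose K : set (params_rV R N d (ctx N S)) :=
  [set v | forall k, (`[- M, M] : set R) (v ord0 k)].
have K_compact : compact K.
  by apply: (@rV_compact _ _ (fun=> `[- M, M])) => _; exact: segment_compact.
have K_params (W : 'M[R]_(N, d)) (E : ctx N S -> 'cV[R]_d) : (forall i j, `|W i j| <= M) ->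
    (forall t k, `|E t k 0| <= M) -> K (params W E).
  by move=> W_le E_le k; rewrite /= in_itv /= -ler_norml; exact: params_bounded.
have K0 : K 0 by move=> k; rewrite /= mxE in_itv /= lerNl oppr0 (le_trans ler01 M_ge1).
have [v Kv v_min] := compact_EVT_min (ex_intro _ 0 K0) K_compact
  (continuous_subspaceT (@continuous_expected_xent_params d)).
exists (mx_of_params v), (emb_of_params v) => W0 E0.
have [W0E0_le|/ltW] := leP (expected_xent (encoder W0 E0)) c; last first.
  by apply: le_trans; exact: v_min (mem_set K0).
have [W [E [W_le E_le <-]]] := bounded_encoder W0E0_le.
have -> : encoder W E = encoder (mx_of_params (params W E)) (emb_of_params (params W E)).
  by rewrite mx_of_paramsK emb_of_paramsK.
apply/v_min/mem_set/K_params => [i j|t k]; first exact: le_trans (W_le i j) M_ge1.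
by apply: le_trans (E_le t k) _; rewrite lerDl.
Qed.

End NextToken.

Lemma inf_image_attained (T : Type) (R : realType) (A : set T) (g : T -> R) x :
  A x -> (forall y, A y -> g x <= g y) -> inf [set g y | y in A] = g x.
Proof.
move=> Ax x_min; have lb : lbound [set g y | y in A] (g x) by move=> _ [y Ay <-]; exact: x_min.
apply/le_anti/andP; split; first by apply: ge_inf; [exists (g x) | exists x].
by apply: lb_le_inf => //; exists (g x), x.
Qed.

Theorem lemma1 (R : realType) (N S d : nat) (hN : (1 <= N)%N) (hS : (1 <= S)%N)
  (hd : (1 <= d)%N) (prior : ctx N S -> R) (cond : ctx N S -> 'I_N -> R)
  (hpi : is_next_token_dist prior cond)
  (hfull : forall t i, cond t i != 0) :
  exists f : ctx N S -> 'cV[R]_N, @encoders R N S d f /\ dKL prior cond f = @dKL_L R N S d prior cond.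
Proof.
have [W [E W_E_min]] := expected_xent_min hN hpi hfull d.
exists (encoder W E); split; first by exists W, E.
rewrite /dKL_L (inf_image_attained (x := encoder W E)) //; first by exists W, E.
by move=> _ [W0 [E0 ->]]; rewrite !(dKLE hN hpi hfull) lerD2l; exact: W_E_min.
Qed.
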